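(* Let $\delta_1,\dots,\delta_k$ be positive real numbers and let $\tilde D_1,\dots,\tilde D_k\in M_n(\mathbb{C})$ be such that each $\tilde D_i$ is a $\delta_i$-generalized row stochastic matrix or a $\delta_i$-generalized column stochastic matrix, with $\|\tilde D_i\|_2=\delta_i$. Let $S_k(\tilde D)=\tilde D_1+\cdots+\tilde D_k$ and $\delta=\delta_1+\cdots+\delta_k$. Then $S_k(\tilde D)$ is a $\delta$-generalized doubly stochastic matrix with $\|S_k(\tilde D)\|_2=\delta$, and for every $m\in\mathbb{N}$ and every block structure $\mathbb{B}\subseteq M_n(\mathbb{C})$, $\mu_{\mathbb{B}}(S_k(\tilde D)^m)=\delta^m$.
   Context: A $\delta$-generalized row (resp. column) stochastic matrix is a square complex matrix all of whose row (resp. column) sums equal $\delta$; it is $\delta$-generalized doubly stochastic if both hold. $\|M\|_2$ denotes the spectral norm. A block structure is a set of the form $\mathbb{B}=\{\operatorname{diag}(\delta_1I_{k_1},\dots,\delta_rI_{k_r},\Delta_1,\dots,\Delta_s)\mid \delta_i\in\mathbb{C},\ \Delta_j\in M_{n_j}(\mathbb{C})\}\subseteq M_n(\mathbb{C})$ for some $r,s\in\mathbb{N}_0$ and positive integers $k_i,n_j$ with $\sum k_i+\sum n_j=n$. The structured singular value is $\mu_{\mathbb{B}}(M)=0$ if $\det(I+M\Delta)\neq0$ for all $\Delta\in\mathbb{B}$, and otherwise $\mu_{\mathbb{B}}(M)=\big(\min\{\|\Delta\|_2\mid \Delta\in\mathbb{B},\ \det(I+M\Delta)=0\}\big)^{-1}$.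 *)

From HB Require Import structures.
From mathcomp Require Import all_boot all_order all_algebra.
From mathcomp Require Import boolp classical_sets reals.
From mathcomp Require Import complex.
Set Implicit Arguments. Unset Strict Implicit. Unset Printing Implicit Defensive.
Import Order.TTheory GRing.Theory Num.Theory.
Local Open Scope ring_scope.
Local Open Scope classical_set_scope.
Local Open Scope complex_scope.

Section Defs.
Variable R : realType.
Local Notation C := R[i].

Definition gen_row_stoch n (d : C) (M : 'M[C]_n) : Prop :=
  forall i : 'I_n, \sum_(j < n) M i j = d.
Definition gen_col_stoch n (d : C) (M : 'M[C]_n) : Prop :=
  forall j : 'I_n, \sum_(i < n) M i j = d.
Definition gen_doubly_stoch n (d : C) (M : 'M[C]_n) : Prop :=
  gen_row_stoch d M /\ gen_col_stoch d M.

Definition vnorm2 n (x : 'cV[C]_n) : R :=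
  Num.sqrt (\sum_(i < n) (complex.Re (x i 0) ^+ 2 + complex.Im (x i 0) ^+ 2)).

Definition specnorm n (M : 'M[C]_n) : R :=
  sup [set vnorm2 (M *m x) | x in [set x : 'cV[C]_n | vnorm2 x = 1]].

Fixpoint blk (ss : seq nat) (i : nat) : nat :=
  match ss with
  | [::] => 0
  | s :: ss' => if (i < s)%N then 0 else (blk ss' (i - s)).+1
  end.

(* The block structure determined by the sizes ks = (k_1,..,k_r) of the
   repeated scalar blocks and ns = (n_1,..,n_s) of the full blocks:
   well-formedness (positive sizes summing to n) *)
Definition block_structure_ok n (ks ns : seq nat) : Prop :=
  all (fun k => (0 < k)%N) ks /\ all (fun k => (0 < k)%N) ns /\
  (sumn ks + sumn ns = n)%N.

(* membership D \in B = diag(d_1 I_{k_1},..,d_r I_{k_r},Delta_1,..,Delta_s) *)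
Definition in_block_structure n (ks ns : seq nat) (D : 'M[C]_n) : Prop :=
  let ss := ks ++ ns in
  forall i j : 'I_n,
    (blk ss i != blk ss j -> D i j = 0) /\
    (blk ss i = blk ss j -> (blk ss i < size ks)%N ->
       (i != j -> D i j = 0) /\ D i i = D j j).

Definition destab_set n (ks ns : seq nat) (M : 'M[C]_n) : set 'M[C]_n :=
  [set D | in_block_structure ks ns D /\ \det (1%:M + M *m D) = 0].

(* structured singular value; the minimum in the paper is attained, so it
   equals the infimum used here *)
Definition ssv n (ks ns : seq nat) (M : 'M[C]_n) : R :=
  if `[< exists D, destab_set ks ns M D >]
  then (inf [set specnorm D | D in destab_set ks ns M])^-1
  else 0.

End Defs.

From HB Require Import structures.
From mathcomp Require Import all_boot all_order all_algebra.
From mathcomp Require Import boolp classical_sets reals.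
From mathcomp Require Import complex.
From mathcomp Require Import ring lra.
Set Implicit Arguments. Unset Strict Implicit. Unset Printing Implicit Defensive.
Import Order.TTheory GRing.Theory Num.Theory.
Local Open Scope ring_scope.
Local Open Scope complex_scope.

(* Write 1 for the all-ones vector.  If D is d-row stochastic with |D| <= d,
   its column sums c add up to n d and |c|^2 = <D conj(c), 1> <= d sqrt(n) |c|,
   so |c - d 1|^2 <= 0 and c = d 1; similarly a d-column stochastic D with
   |D| <= d has D 1 = d 1.  Hence each D_i, and then S, is doubly stochastic,
   S 1 = delta 1 and |S| <= delta by the triangle inequality: |S| = delta, and
   S^m has norm at most delta^m and eigenvalue delta^m.  If det (I + S^m D) = 0
   then x = - S^m D x for some x != 0, so |D| >= delta^-m; the scalar matrix
   - delta^-m I lies in every block structure and attains this bound. *)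

Lemma det0P_col (F : fieldType) n (A : 'M[F]_n) :
  reflect (exists2 x : 'cV_n, x != 0 & A *m x = 0) (\det A == 0).
Proof.
rewrite -det_tr; apply: (iffP det0P) => [[v v0 vA]|[x x0 Ax]].
  by exists v^T; rewrite ?trmx_eq0 // -[A]trmxK -trmx_mul vA trmx0.
by exists x^T; rewrite ?trmx_eq0 // -trmx_mul Ax trmx0.
Qed.

Lemma mulmx_exp_eigen (K : comPzRingType) n (M : 'M[K]_n) (a : K) (x : 'cV_n) m :
  M *m x = a *: x -> M ^+ m *m x = a ^+ m *: x.
Proof.
move=> Mx; elim: m => [|m IHm]; first by rewrite !expr0 mul1mx scale1r.
by rewrite exprS -mulmxE -mulmxA IHm -scalemxAr Mx scalerA -exprSr.
Qed.

Section EuclideanNorm.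
Variables (R : realType) (n : nat).
Local Notation C := R[i].
Implicit Types (x y v : 'cV[C]_n).

Definition rdot x y : R :=
  \sum_i (complex.Re (x i 0) * complex.Re (y i 0)
          + complex.Im (x i 0) * complex.Im (y i 0)).

Lemma rdotC x y : rdot x y = rdot y x.
Proof. by apply: eq_bigr => i _; rewrite mulrC [_ * complex.Im _]mulrC. Qed.

Lemma rdot0l x : rdot 0 x = 0.
Proof. by rewrite /rdot big1 // => i _; rewrite mxE /= !mul0r addr0. Qed.

Lemma rdotxx_ge0 x : 0 <= rdot x x.
Proof. by apply: sumr_ge0 => i _; rewrite -!expr2 addr_ge0 ?sqr_ge0. Qed.

Lemma vnorm2E x : vnorm2 x = Num.sqrt (rdot x x).
Proof. by congr Num.sqrt; apply: eq_bigr => i _; rewrite !expr2. Qed.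

Lemma sqr_vnorm2 x : vnorm2 x ^+ 2 = rdot x x.
Proof. by rewrite vnorm2E sqr_sqrtr ?rdotxx_ge0. Qed.

Lemma vnorm2_ge0 x : 0 <= vnorm2 x.
Proof. exact: sqrtr_ge0. Qed.

Lemma rdotxx_eq0 x : (rdot x x == 0) = (x == 0).
Proof.
apply/eqP/eqP => [x0|->]; last exact: rdot0l.
apply/matrixP => i j; rewrite (ord1 j) mxE.
have /eqP := psumr_eq0P (fun k _ => addr_ge0 (sqr_ge0 _) (sqr_ge0 _)) x0 (i := i) isT.
rewrite paddr_eq0 ?sqr_ge0 // ?mulf_eq0 ?orbb.
by case: (x i 0) => a b /andP[/= /eqP-> /eqP->].
Qed.

Lemma vnorm2_eq0 x : (vnorm2 x == 0) = (x == 0).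
Proof. by rewrite -sqrf_eq0 sqr_vnorm2 rdotxx_eq0. Qed.

Lemma vnorm2_gt0 x : (0 < vnorm2 x) = (x != 0).
Proof. by rewrite lt_def vnorm2_eq0 vnorm2_ge0 andbT. Qed.

Lemma vnorm2_0 : vnorm2 (0 : 'cV[C]_n) = 0.
Proof. by apply/eqP; rewrite vnorm2_eq0. Qed.

Lemma rdot_lincomb (a b : R) x y :
  rdot (a%:C *: x + b%:C *: y) (a%:C *: x + b%:C *: y) =
  a ^+ 2 * rdot x x + b ^+ 2 * rdot y y + 2 * a * b * rdot x y.
Proof.
rewrite /rdot !mulr_sumr -!big_split /=; apply: eq_bigr => i _.
by rewrite !mxE; case: (x i 0) => ? ?; case: (y i 0) => ? ? /=; ring.
Qed.

Lemma rdot_le_vnorm2 x y : rdot x y <= vnorm2 x * vnorm2 y.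
Proof.
have [->|x0] := eqVneq x 0; first by rewrite rdot0l vnorm2_0 mul0r.
have [->|y0] := eqVneq y 0; first by rewrite rdotC rdot0l vnorm2_0 mulr0.
set a := vnorm2 x; set b := vnorm2 y.
(* [0 <= |b x - a y|^2 = 2 a b (a b - rdot x y)] *)
have ab2_gt0 : 0 < 2 * b * a by rewrite !mulr_gt0 ?vnorm2_gt0.
rewrite -subr_ge0 -(pmulr_rge0 _ ab2_gt0).
have := rdotxx_ge0 (b%:C *: x + (- a)%:C *: y).
by rewrite rdot_lincomb -!sqr_vnorm2 -/a -/b; congr (_ <= _); ring.
Qed.

Lemma ler_vnorm2D x y : vnorm2 (x + y) <= vnorm2 x + vnorm2 y.
Proof.
rewrite -ler_sqr ?nnegrE ?addr_ge0 ?vnorm2_ge0 // sqr_vnorm2.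
have -> : x + y = 1%:C *: x + 1%:C *: y by rewrite !scale1r.
rewrite rdot_lincomb -!sqr_vnorm2 sqrrD.
have := rdot_le_vnorm2 x y; rewrite !expr1n !mul1r; lra.
Qed.

Lemma ler_vnorm2_sum (I : finType) (v : I -> 'cV[C]_n) :
  vnorm2 (\sum_i v i) <= \sum_i vnorm2 (v i).
Proof.
elim/big_ind2: _ => [|x1 x2 y1 y2 h1 h2|//]; first by rewrite vnorm2_0.
exact: le_trans (ler_vnorm2D _ _) (lerD h1 h2).
Qed.

Lemma vnorm2Z (c : C) x :
  vnorm2 (c *: x) = Num.sqrt (complex.Re c ^+ 2 + complex.Im c ^+ 2) * vnorm2 x.
Proof.
rewrite !vnorm2E -sqrtrM ?addr_ge0 ?sqr_ge0 // /rdot mulr_sumr.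
congr Num.sqrt; apply: eq_bigr => i _.
by rewrite !mxE; case: c => ? ?; case: (x i 0) => ? ? /=; ring.
Qed.

Lemma vnorm2ZR (c : R) x : 0 <= c -> vnorm2 (c%:C *: x) = c * vnorm2 x.
Proof. by move=> c0; rewrite vnorm2Z /= expr0n addr0 sqrtr_sqr ger0_norm. Qed.

Lemma vnorm2N x : vnorm2 (- x) = vnorm2 x.
Proof.
by rewrite -scaleN1r vnorm2Z /= sqrrN expr1n oppr0 expr0n addr0 sqrtr1 mul1r.
Qed.

Lemma vnorm2_conj v : vnorm2 (map_mx conjc v) = vnorm2 v.
Proof.
congr Num.sqrt; apply: eq_bigr => i _.
by rewrite mxE; case: (v i 0) => ? ? /=; rewrite sqrrN.
Qed.

Lemma normc_entry_le_vnorm2 x i :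
  Num.sqrt (complex.Re (x i 0) ^+ 2 + complex.Im (x i 0) ^+ 2) <= vnorm2 x.
Proof.
have terms_ge0 j : 0 <= complex.Re (x j 0) ^+ 2 + complex.Im (x j 0) ^+ 2.
  by rewrite addr_ge0 ?sqr_ge0.
by rewrite ler_sqrt ?sumr_ge0 // (bigD1 i) //= lerDl sumr_ge0.
Qed.

Lemma rdot_const1 x : rdot x (const_mx 1) = \sum_i complex.Re (x i 0).
Proof. by apply: eq_bigr => i _; rewrite mxE /= mulr1 mulr0 addr0. Qed.

Lemma vnorm2_const1 : vnorm2 (const_mx 1 : 'cV[C]_n) = Num.sqrt n%:R.
Proof.
rewrite vnorm2E rdot_const1 (eq_bigr (fun=> 1)) ?sumr_const ?card_ord //.
by move=> i _; rewrite mxE.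
Qed.

End EuclideanNorm.

Section SpectralNorm.
Variables (R : realType) (n : nat).
Local Notation C := R[i].
Implicit Types (x u : 'cV[C]_n) (M : 'M[C]_n).

Definition bounded_by M (c : R) := forall x, vnorm2 (M *m x) <= c * vnorm2 x.

Lemma bounded_by_exists M : exists c, bounded_by M c.
Proof.
exists (\sum_j vnorm2 (col j M)) => x.
have -> : M *m x = \sum_j x j 0 *: col j M.
  apply/matrixP => i k; rewrite (ord1 k) !mxE summxE.
  by apply: eq_bigr => j _; rewrite !mxE mulrC.
apply: le_trans (ler_vnorm2_sum _) _; rewrite mulr_suml; apply: ler_sum => j _.
by rewrite vnorm2Z mulrC ler_wpM2l ?vnorm2_ge0 ?normc_entry_le_vnorm2.
Qed.

Lemma vnorm2_normalize x : x != 0 -> vnorm2 ((vnorm2 x)^-1%:C *: x) = 1.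
Proof.
rewrite -vnorm2_gt0 => x_gt0.
by rewrite vnorm2ZR ?invr_ge0 ?vnorm2_ge0 // mulVf ?gt_eqF.
Qed.

Lemma vnorm2_mulmx_le_specnorm M u : vnorm2 u = 1 -> vnorm2 (M *m u) <= specnorm M.
Proof.
move=> u1; have [c Mc] := bounded_by_exists M.
apply: ub_le_sup; last by exists u.
by exists c => _ [v /= v1 <-]; rewrite -[c]mulr1 -v1 Mc.
Qed.

Lemma bounded_by_specnorm M : bounded_by M (specnorm M).
Proof.
move=> x; have [->|x0] := eqVneq x 0; first by rewrite mulmx0 !vnorm2_0 mulr0.
have x_gt0 : 0 < vnorm2 x by rewrite vnorm2_gt0.
have := vnorm2_mulmx_le_specnorm M (vnorm2_normalize x0).
by rewrite -scalemxAr vnorm2ZR ?invr_ge0 ?vnorm2_ge0 // mulrC ler_pdivrMr.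
Qed.

Lemma specnorm_eq M c x : bounded_by M c -> x != 0 ->
  vnorm2 (M *m x) = c * vnorm2 x -> specnorm M = c.
Proof.
move=> Mc x0 Mx; have x_gt0 : 0 < vnorm2 x by rewrite vnorm2_gt0.
apply: le_anti; apply/andP; split.
  apply: ge_sup.
    by exists (vnorm2 (M *m ((vnorm2 x)^-1%:C *: x))), ((vnorm2 x)^-1%:C *: x);
      rewrite /= ?vnorm2_normalize.
  by move=> _ [u /= u1 <-]; rewrite -[c]mulr1 -u1 Mc.
have := vnorm2_mulmx_le_specnorm M (vnorm2_normalize x0).
by rewrite -scalemxAr vnorm2ZR ?invr_ge0 ?vnorm2_ge0 // Mx mulrCA mulVf ?gt_eqF ?mulr1.
Qed.

Lemma bounded_by_sum (I : finType) (M : I -> 'M[C]_n) (c : I -> R) :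
  (forall i, bounded_by (M i) (c i)) -> bounded_by (\sum_i M i) (\sum_i c i).
Proof.
move=> Mc x; rewrite mulmx_suml mulr_suml.
apply: le_trans (ler_vnorm2_sum (fun i => M i *m x)) _.
by apply: ler_sum => i _; apply: Mc.
Qed.

Lemma bounded_by_exp M c m : 0 <= c -> bounded_by M c -> bounded_by (M ^+ m) (c ^+ m).
Proof.
move=> c0 Mc; elim: m => [|m IHm] x; first by rewrite !expr0 mul1mx mul1r.
rewrite exprS -mulmxE -mulmxA exprS -mulrA.
exact: le_trans (Mc _) (ler_wpM2l c0 (IHm x)).
Qed.

End SpectralNorm.

Section GeneralizedStochastic.
Variables (R : realType) (n : nat).
Local Notation C := R[i].
Local Notation ones := (const_mx 1 : 'cV[C]_n).
Implicit Types (M : 'M[C]_n).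

Lemma gen_row_stochE (d : C) M : gen_row_stoch d M <-> M *m ones = d *: ones.
Proof.
split => [Md | /matrixP Md i].
  apply/matrixP => i j; rewrite !mxE mulr1 -(Md i).
  by apply: eq_bigr => k _; rewrite mxE mulr1.
have := Md i 0; rewrite !mxE mulr1 => <-.
by apply: eq_bigr => k _; rewrite mxE mulr1.
Qed.

Lemma gen_col_stoch_tr (d : C) M : gen_col_stoch d M <-> gen_row_stoch d M^T.
Proof. by split => Md j; rewrite -(Md j); apply: eq_bigr => i _; rewrite mxE. Qed.

Lemma eq_const_of_sum_vnorm2 (d : R) (v : 'cV[C]_n) : 0 <= d ->
  \sum_i v i 0 = (d *+ n)%:C -> vnorm2 v <= d * Num.sqrt n%:R -> v = d%:C *: ones.
Proof.
move=> d0 v_sum v_norm.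
have v_ones : rdot v ones = d *+ n by rewrite rdot_const1 -raddf_sum v_sum.
have ones_ones : rdot ones ones = n%:R.
  by rewrite -sqr_vnorm2 vnorm2_const1 sqr_sqrtr ?ler0n.
have v_v : rdot v v <= d ^+ 2 * n%:R.
  rewrite -sqr_vnorm2 -(sqr_sqrtr (ler0n _ n)) -exprMn.
  by rewrite ler_sqr ?nnegrE ?vnorm2_ge0 ?mulr_ge0 ?sqrtr_ge0.
apply/eqP; rewrite -subr_eq0 -rdotxx_eq0 eq_le rdotxx_ge0 andbT.
have -> : v - d%:C *: ones = 1%:C *: v + (- d)%:C *: ones.
  by rewrite scale1r rmorphN scaleNr.
rewrite rdot_lincomb v_ones ones_ones.
have -> : 1 ^+ 2 * rdot v v + (- d) ^+ 2 * n%:R + 2 * 1 * - d * (d *+ n) =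
          rdot v v - d ^+ 2 * n%:R by rewrite -mulr_natr; ring.
by rewrite subr_le0.
Qed.

Lemma gen_row_stoch_of_col (d : R) M : 0 <= d -> bounded_by M d ->
  gen_col_stoch d%:C M -> gen_row_stoch d%:C M.
Proof.
move=> d0 Md Mcol; apply/gen_row_stochE/eq_const_of_sum_vnorm2 => //.
  rewrite (eq_bigr (fun i => \sum_j M i j)); last first.
    by move=> i _; rewrite mxE; apply: eq_bigr => j _; rewrite mxE mulr1.
  by rewrite exchange_big (eq_bigr (fun=> d%:C)) // sumr_const card_ord raddfMn.
by rewrite -vnorm2_const1; apply: Md.
Qed.

Lemma gen_col_stoch_of_row (d : R) M : 0 <= d -> bounded_by M d ->
  gen_row_stoch d%:C M -> gen_col_stoch d%:C M.
Proof.
move=> d0 Md Mrow; apply/(gen_col_stoch_tr _ _).2/gen_row_stochE.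
set v := M^T *m ones.
have v_entry j : v j 0 = \sum_i M i j.
  by rewrite mxE; apply: eq_bigr => i _; rewrite !mxE mulr1.
apply: eq_const_of_sum_vnorm2 => //.
  under eq_bigr do rewrite v_entry.
  by rewrite exchange_big (eq_bigr (fun=> d%:C)) // sumr_const card_ord raddfMn.
set x := map_mx conjc v.
(* [<M x, 1> = |v|^2] stands in for the adjoint bound [|M^* 1| <= d |1|]. *)
have adjoint : rdot (M *m x) ones = rdot v v.
  rewrite rdot_const1 -raddf_sum.
  under eq_bigr do rewrite mxE.
  rewrite exchange_big raddf_sum; apply: eq_bigr => j _.
  rewrite -mulr_suml -v_entry [x j 0]mxE.
  by case: (v j 0) => a b /=; ring.
have : vnorm2 v ^+ 2 <= d * Num.sqrt n%:R * vnorm2 v.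
  rewrite sqr_vnorm2 -adjoint; apply: le_trans (rdot_le_vnorm2 _ _) _.
  by rewrite vnorm2_const1 -(vnorm2_conj v) -/x mulrAC ler_wpM2r ?sqrtr_ge0.
have := vnorm2_ge0 v; rewrite le_eqVlt => /orP[/eqP <-|v_gt0].
  by rewrite mulr_ge0 ?sqrtr_ge0.
by rewrite expr2 ler_pM2r.
Qed.

Lemma gen_doubly_stoch_of_bounded (d : R) M : 0 <= d -> bounded_by M d ->
  gen_row_stoch d%:C M \/ gen_col_stoch d%:C M -> gen_doubly_stoch d%:C M.
Proof.
move=> d0 Md [Mrow|Mcol]; split => //.
  exact: gen_col_stoch_of_row.
exact: gen_row_stoch_of_col.
Qed.

Lemma gen_doubly_stoch_sum (I : finType) (d : I -> C) (M : I -> 'M[C]_n) :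
  (forall i, gen_doubly_stoch (d i) (M i)) ->
  gen_doubly_stoch (\sum_i d i) (\sum_i M i).
Proof.
move=> Md; split => j; under eq_bigr do rewrite summxE;
  by rewrite exchange_big; apply: eq_bigr => i _; case: (Md i).
Qed.

End GeneralizedStochastic.

Section StructuredSingularValue.
Variables (R : realType) (n : nat) (ks ns : seq nat).
Local Notation C := R[i].
Implicit Types (M D : 'M[C]_n) (x : 'cV[C]_n).
Local Open Scope classical_set_scope.

Lemma scalar_in_block_structure (a : C) : in_block_structure ks ns (a%:M : 'M_n).
Proof.
move=> i j; rewrite !mxE; split => [blk_ij|_ _].
  have /negbTE-> : i != j by apply: contra blk_ij => /eqP->.
  by rewrite mulr0n.
by split=> [/negbTE->|]; rewrite ?mulr0n ?eqxx.
Qed.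

Lemma destab_scalar M (c : R) x : c != 0 -> x != 0 -> M *m x = c%:C *: x ->
  destab_set ks ns M (- c^-1%:C)%:M.
Proof.
move=> c0 x0 Mx; split; first exact: scalar_in_block_structure.
apply/eqP/det0P_col; exists x => //.
rewrite mulmxDl mul1mx -mulmxA mul_scalar_mx -scalemxAr Mx scalerA mulNr -rmorphM.
by rewrite mulVf // rmorph1 scaleN1r subrr.
Qed.

Lemma specnorm_ge_of_destab M (c : R) D : 0 < c -> bounded_by M c ->
  destab_set ks ns M D -> c^-1 <= specnorm D.
Proof.
move=> c_gt0 Mc [_ /eqP/det0P_col[x x0 Dx]].
have x_gt0 : 0 < vnorm2 x by rewrite vnorm2_gt0.
have x_eq : x = - (M *m (D *m x)).
  by apply/eqP; rewrite -addr_eq0 mulmxA -{1}(mul1mx x) -mulmxDl Dx.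
have : vnorm2 x <= c * (specnorm D * vnorm2 x).
  rewrite {1}x_eq vnorm2N.
  exact: le_trans (Mc _) (ler_wpM2l (ltW c_gt0) (bounded_by_specnorm _ _)).
rewrite mulrA -{1}(mul1r (vnorm2 x)) ler_pM2r // => cD_ge1.
by rewrite -[c^-1]mulr1 ler_pdivrMl.
Qed.

Lemma ssv_eigen M (c : R) x : 0 < c -> bounded_by M c -> x != 0 ->
  M *m x = c%:C *: x -> ssv ks ns M = c.
Proof.
move=> c_gt0 Mc x0 Mx; set D0 : 'M_n := (- c^-1%:C)%:M.
have D0_destab : destab_set ks ns M D0 by apply: destab_scalar x0 Mx; rewrite gt_eqF.
have D0_norm : specnorm D0 = c^-1.
  have D0y y : vnorm2 (D0 *m y) = c^-1 * vnorm2 y.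
    by rewrite mul_scalar_mx scaleNr vnorm2N vnorm2ZR // invr_ge0 ltW.
  by apply: (specnorm_eq _ x0 (D0y x)) => y; rewrite D0y.
have lb D : destab_set ks ns M D -> c^-1 <= specnorm D.
  exact: specnorm_ge_of_destab.
rewrite /ssv asboolT; last by exists D0.
suff -> : inf [set specnorm D | D in destab_set ks ns M] = c^-1 by rewrite invrK.
apply: le_anti; apply/andP; split.
  rewrite -[X in _ <= X]D0_norm; apply: ge_inf; last by exists D0.
  by exists c^-1 => _ [D /lb ? <-].
by apply: lb_le_inf; [exists c^-1, D0 | move=> _ [D /lb ? <-]].
Qed.

End StructuredSingularValue.

Theorem corollary2p6 (R : realType) (n k : nat) (hn : (0 < n)%N) (hk : (0 < k)%N)
    (delta : 'I_k -> R) (Dt : 'I_k -> 'M[R[i]]_n)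
    (hpos : forall i, 0 < delta i)
    (hstoch : forall i, gen_row_stoch (delta i)%:C (Dt i) \/
                        gen_col_stoch (delta i)%:C (Dt i))
    (hnorm : forall i, specnorm (Dt i) = delta i) :
  let S := \sum_(i < k) Dt i in
  let d := \sum_(i < k) delta i in
  gen_doubly_stoch d%:C S /\ specnorm S = d /\
  forall (m : nat) (ks ns : seq nat), block_structure_ok n ks ns ->
    ssv ks ns (S ^+ m) = d ^+ m.
Proof.
move=> S d.
have Dt_bounded i : bounded_by (Dt i) (delta i).
  by rewrite -hnorm; apply: bounded_by_specnorm.
have Dt_doubly i : gen_doubly_stoch (delta i)%:C (Dt i).
  exact: gen_doubly_stoch_of_bounded (ltW (hpos i)) (Dt_bounded i) (hstoch i).
have S_doubly : gen_doubly_stoch d%:C S.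
  by rewrite /d raddf_sum; apply: gen_doubly_stoch_sum.
have S_bounded : bounded_by S d := bounded_by_sum Dt_bounded.
have d_gt0 : 0 < d.
  rewrite /d (bigD1 (Ordinal hk)) //= ltr_wpDr ?hpos //.
  by apply: sumr_ge0 => i _; apply: ltW.
pose ones : 'cV[R[i]]_n := const_mx 1.
have ones_neq0 : ones != 0.
  by apply/eqP => /matrixP/(_ (Ordinal hn) 0)/eqP; rewrite !mxE oner_eq0.
have S_ones : S *m ones = d%:C *: ones.
  by apply/gen_row_stochE; case: S_doubly.
split=> //; split.
  by apply: specnorm_eq S_bounded ones_neq0 _; rewrite S_ones vnorm2ZR // ltW.
(* Scalar matrices lie in every block structure. *)
move=> m ks ns _.
apply: ssv_eigen (bounded_by_exp m (ltW d_gt0) S_bounded) ones_neq0 _.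
  exact: exprn_gt0.
by rewrite (mulmx_exp_eigen m S_ones) rmorphXn.
Qed.
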